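(* Let $\mathcal{H}$ be any undirected hypergraph on $\{1,2,3\}$ and consider any network dynamical system on $\mathcal{H}$ with one-dimensional node states, smooth $F$ and smooth edge-dependent coupling functions $G_e$. Then the system does not possess a Field cycle; i.e., there do not exist distinct $i,j\in\{1,2,3\}$ such that $\Delta$, $S_i$, $S_j$ are dynamically invariant and there are two distinct hyperbolic equilibria $\xi_1,\xi_2\in\Delta$, a heteroclinic trajectory from $\xi_1$ to $\xi_2$ contained in $S_i\setminus\Delta$, and a heteroclinic trajectory from $\xi_2$ to $\xi_1$ contained in $S_j\setminus\Delta$.
   Context: A directed hypergraph on $\mathcal{V}=\{1,\dots,N\}$ is a set $\mathcal{E}$ of hyperedges $e=(T(e),H(e))$ with nonempty tail $T(e)$ and head $H(e)$; it is undirected if every hyperedge has the form $(A,A)$. A network dynamical system on it is $\dot x_k = F(x_k) + \sum_{e\in\mathcal{E}:\,k\in H(e)} G_e(x_k; x_{T(e)})$ on $\mathbb{R}^N$, with $F:\mathbb R\to\mathbb R$ smooth and each $G_e:\mathbb{R}\times\mathbb{R}^{|T(e)|}\to\mathbb{R}$ smooth, invariant under permutations of its tail arguments and depending nontrivially on them. For $N=3$: $\Delta=\{x_1=x_2=x_3\}$, $S_1=\{x_2=x_3\}$, $S_2=\{x_1=x_3\}$, $S_3=\{x_1=x_2\}$ ($S_j$ is the set where all coordinates except $x_j$ coincide). A heteroclinic trajectory from $\xi$ to $\xi'$ is a solution $x(t)$, $t\in\mathbb R$, with $x(t)\to\xi$ as $t\to-\infty$ and $x(t)\to\xi'$ as $t\to+\infty$.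 An equilibrium is hyperbolic if its Jacobian has no eigenvalue with zero real part. *)

From HB Require Import structures.
From mathcomp Require Import all_boot all_order all_algebra.
From mathcomp Require Import all_classical all_reals all_analysis.
From mathcomp Require Import Rstruct Rstruct_topology.
From mathcomp Require Import perm.
From mathcomp Require complex.
Import complex.ComplexField.
From Stdlib Require Rdefinitions.
Notation R := Rdefinitions.R.
Set Implicit Arguments. Unset Strict Implicit. Unset Printing Implicit Defensive.
Import Order.TTheory GRing.Theory Num.Theory.
Import numFieldNormedType.Exports.
Local Open Scope classical_set_scope.
Local Open Scope ring_scope.

Definition unitv (n : nat) (i : 'I_n) : 'rV[R]_n := delta_mx 0 i.

Fixpoint Ck (k : nat) (n : nat) (f : 'rV[R]_n -> R^o) : Prop :=
  match k with
  | 0 => continuous f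
  | k'.+1 => (forall (x : 'rV[R]_n) (i : 'I_n), derivable f x (unitv i)) /\
             (forall i : 'I_n, Ck k' (fun x => 'D_(unitv i) f x))
  end.

Definition smooth (n : nat) (f : 'rV[R]_n -> R^o) : Prop := forall k, Ck k f.

Definition smooth1 (F : R -> R) : Prop := smooth (fun z : 'rV[R]_1 => F (z 0 0)).

Definition smooth2 (m : nat) (G : R -> 'rV[R]_m -> R) : Prop :=
  smooth (fun z : 'rV[R]_(1 + m) => G (lsubmx z 0 0) (rsubmx z)).

Definition tail_symmetric (m : nat) (G : R -> 'rV[R]_m -> R) : Prop :=
  forall (s : 'S_m) (y : R) (v : 'rV[R]_m),
    G y (\row_(j < m) v 0 (s j)) = G y v.

Definition tail_nontrivial (m : nat) (G : R -> 'rV[R]_m -> R) : Prop :=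
  exists (y : R) (v w : 'rV[R]_m), G y v <> G y w.

(* An undirected hypergraph on {1,2,3} (here 'I_3 = {0,1,2}) is a set E of
   hyperedges (A, A), represented by their (nonempty) vertex sets A.
   The coupling function of hyperedge A is G A : R -> R^{|A|} -> R. *)
Definition undirected_hypergraph (E : {set {set 'I_3}}) : Prop :=
  forall A, A \in E -> A != finset.set0.

(* tail state x_{T(e)} = x_A, listed along the enumeration of A *)
Definition tail_state (A : {set 'I_3}) (x : 'rV[R]_3) : 'rV[R]_#|A| :=
  \row_(j < #|A|) x 0 (enum_val j).

Definition netvf (E : {set {set 'I_3}}) (F : R -> R)
  (G : forall A : {set 'I_3}, R -> 'rV[R]_#|A| -> R) (x : 'rV[R]_3) : 'rV[R]_3 :=
  \row_(k < 3) (F (x 0 k) + \sum_(A in E | k \in A) G A (x 0 k) (tail_state A x)).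

Definition Delta (x : 'rV[R]_3) : Prop := x 0 0 = x 0 1 /\ x 0 1 = x 0 2.
Definition Ssub (i : 'I_3) (x : 'rV[R]_3) : Prop :=
  forall j k : 'I_3, j != i -> k != i -> x 0 j = x 0 k.

(* dynamical invariance of a (linear) subspace V under the vector field f *)
Definition dyn_invariant (f : 'rV[R]_3 -> 'rV[R]_3) (V : 'rV[R]_3 -> Prop) : Prop :=
  forall x, V x -> V (f x).

Definition equilibrium (f : 'rV[R]_3 -> 'rV[R]_3) (xi : 'rV[R]_3) : Prop := f xi = 0.

Definition jacobian (f : 'rV[R]_3 -> 'rV[R]_3) (xi : 'rV[R]_3) : 'M[R]_3 :=
  \matrix_(i < 3, j < 3) 'D_(unitv j) (fun x => f x 0 i : R^o) xi.

Definition hyperbolic (f : 'rV[R]_3 -> 'rV[R]_3) (xi : 'rV[R]_3) : Prop :=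
  forall lam : complex.complex R,
    eigenvalue (map_mx (fun r : R => complex.Complex r 0) (jacobian f xi)) lam ->
    complex.Re lam <> 0.

Definition heteroclinic_in (f : 'rV[R]_3 -> 'rV[R]_3) (xi xi' : 'rV[R]_3)
  (C : 'rV[R]_3 -> Prop) : Prop :=
  exists x : R^o -> 'rV[R]_3,
    (forall t : R^o, is_derive t 1 x (f (x t))) /\
    (x t @[t --> -oo] --> xi) /\
    (x t @[t --> +oo] --> xi') /\
    (forall t : R, C (x t)).

Definition field_cycle (f : 'rV[R]_3 -> 'rV[R]_3) : Prop :=
  exists (i j : 'I_3) (xi1 xi2 : 'rV[R]_3),
    i != j /\
    dyn_invariant f Delta /\ dyn_invariant f (Ssub i) /\ dyn_invariant f (Ssub j) /\
    xi1 <> xi2 /\ Delta xi1 /\ Delta xi2 /\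
    equilibrium f xi1 /\ hyperbolic f xi1 /\
    equilibrium f xi2 /\ hyperbolic f xi2 /\
    heteroclinic_in f xi1 xi2 (fun x => Ssub i x /\ ~ Delta x) /\
    heteroclinic_in f xi2 xi1 (fun x => Ssub j x /\ ~ Delta x).

From HB Require Import structures.
From mathcomp Require Import all_boot all_order all_algebra.
From mathcomp Require Import all_classical all_reals all_analysis.
From mathcomp Require Import Rstruct Rstruct_topology.
From mathcomp Require Import perm.
From mathcomp Require complex.
From mathcomp Require Import ring lra zify.
Set Implicit Arguments. Unset Strict Implicit. Unset Printing Implicit Defensive.
Import Order.TTheory GRing.Theory Num.Theory.
Import complex.ComplexField.
Local Open Scope classical_set_scope.
Local Open Scope ring_scope.

(* Let k be the third node and let λ = ∂_i (f_i - f_j) at ξ₁ be the rate at which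
   x_i - x_j grows inside S_i near Δ.  Since the couplings are symmetric in their
   tails, f_i - f_j, f_k - f_i and f_j - f_k, evaluated on S_k, S_j and S_i at points
   with the same two values, add up to zero; so invariance of S_i and S_j forces
   f_i = f_j on S_k, a plane through ξ₁.  Differentiating along S_k shows that e_i - e_j
   is a left eigenvector of the Jacobian at ξ₁ with eigenvalue λ, and that the
   corresponding rate ∂_j (f_j - f_i) inside S_j is λ as well.  A trajectory in S_i \ Δ
   emanating from ξ₁ forces λ ≥ 0, and one in S_j \ Δ converging to ξ₁ forces λ ≤ 0:
   otherwise x_i - x_j, resp. x_j - x_i, which never vanishes, would grow in absolute
   value in the wrong time direction near ξ₁.  Hence λ = 0, contradicting the
   hyperbolicity of ξ₁. *)

Lemma increment_eq_derive (V1 V2 W : normedModType R) (f1 : V1 -> W) (f2 : V2 -> W)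
    (a1 v1 : V1) (a2 v2 : V2) :
  (forall h : R, f1 (h *: v1 + a1) - f1 a1 = f2 (h *: v2 + a2) - f2 a2) ->
  (derivable f1 a1 v1 <-> derivable f2 a2 v2) /\ 'D_v1 f1 a1 = 'D_v2 f2 a2.
Proof.
move=> incr_eq; rewrite /derivable /derive.
suff -> : (fun h : R => h^-1 *: ((f1 \o shift a1) (h *: v1) - f1 a1)) =
          (fun h : R => h^-1 *: ((f2 \o shift a2) (h *: v2) - f2 a2)) by [].
by apply: funext => h /=; rewrite incr_eq.
Qed.

Lemma derive_along_line (V W : normedModType R) (g : V -> W) (v a : V) (s : R) :
  (derivable (fun s : R^o => g (s *: v + a)) s 1 <-> derivable g (s *: v + a) v) /\
  'D_1 (fun s : R^o => g (s *: v + a)) s = 'D_v g (s *: v + a).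
Proof. by apply: increment_eq_derive => h /=; rewrite scaler1 scalerDl addrA. Qed.

Lemma MVT_between (phi dphi : R^o -> R^o) :
  (forall s : R^o, is_derive s 1 phi (dphi s)) ->
  forall a b : R, exists z, (a <= z <= b \/ b <= z <= a) /\
                            phi b - phi a = dphi z * (b - a).
Proof.
move=> dphiP a b.
have phi_cont : continuous phi.
  by move=> s; apply/differentiable_continuous/derivable1_diffP; case: (dphiP s).
have [ab|ba] := leP a b.
  have [z zab ->] := MVT_segment ab (fun s _ => dphiP s) (continuous_subspaceT phi_cont).
  by exists z; rewrite in_itv /= in zab; split; first left.
have [z zba E] := MVT_segment (ltW ba) (fun s _ => dphiP s) (continuous_subspaceT phi_cont).
exists z; rewrite in_itv /= in zba; split; first by right.
by rewrite -opprB E -mulrN opprB.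
Qed.

Lemma line_MVT (V : normedModType R) (g : V -> R^o) (v b : V) (s : R) :
  (forall y, derivable g y v) ->
  exists z, (0 <= z <= s \/ s <= z <= 0) /\
            g (s *: v + b) - g b = s * 'D_v g (z *: v + b).
Proof.
move=> gd.
have dphi (t : R^o) : is_derive t 1 (fun t : R^o => g (t *: v + b)) ('D_v g (t *: v + b)).
  have [dP <-] := derive_along_line g v b t.
  by apply: DeriveDef; first exact/dP.
have [z [zs E]] := MVT_between dphi 0 s.
by exists z; split => //; rewrite scale0r add0r subr0 mulrC in E.
Qed.

Lemma Ck1_partial_increment_cvg n (g : 'rV[R]_n -> R^o) (w y : 'rV[R]_n) (p : 'I_n)
    (c : R) : Ck 1 g ->
  (fun h : R => h^-1 *: (g ((h * c) *: unitv p + (h *: w + y)) - g (h *: w + y)))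
    @ (0:R)^' --> c * 'D_(unitv p) g y.
Proof.
move=> [gd gc]; set e := unitv p.
have /choice [z zP] : forall h, exists zh : R, `|zh| <= `|h * c| /\
    g ((h * c) *: e + (h *: w + y)) - g (h *: w + y) =
    h * c * 'D_e g (zh *: e + (h *: w + y)).
  move=> h; have [z [zb E]] := line_MVT (h *: w + y) (h * c) (gd^~ p).
  exists z; split => //; rewrite ler_norml.
  have := ler_norm (h * c); have := ler_norm (- (h * c)); rewrite normrN.
  by case: zb => /andP[? ?]; lra.
have z0 : z h @[h --> (0:R)^'] --> (0:R).
  apply/(cvgr0Pnorm_le (V := R^o)) => eps eps0; near=> h.
  have c1 : 0 < `|c| + 1 by rewrite ltr_pwDr // normr_ge0.
  have : `|h| <= eps / (`|c| + 1).
    by near: h; apply: (dnbhs0_le (V := R^o)); rewrite divr_gt0.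
  rewrite ler_pdivlMr // => hsmall.
  apply: (le_trans (zP h).1); rewrite normrM.
  by have := normr_ge0 h; have := normr_ge0 c; nra.
have pt_cvg : (z h *: e + (h *: w + y)) @[h --> (0:R)^'] --> y.
  suff : (z h *: e + (h *: w + y)) @[h --> (0:R)^'] --> 0 *: e + (0 *: w + y).
    by rewrite !scale0r !add0r.
  apply: cvgD; first by apply: cvgZ z0 _; exact: cvg_cst.
  apply: cvgD; last exact: cvg_cst.
  by apply: cvgZ; [exact: cvg_within | exact: cvg_cst].
apply: (@cvg_trans _ ((fun h => c * 'D_e g (z h *: e + (h *: w + y)) : R^o) @ (0:R)^')).
  apply: near_eq_cvg; near=> h; rewrite (zP h).2.
  have h0 : h != 0 by near: h; exact: nbhs_dnbhs_neq.
  by rewrite -[RHS]/(h^-1 * (h * c * _)) !mulrA mulVf // mul1r.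
by apply: cvgM; [exact: cvg_cst | exact: continuous_cvg (gc p y) pt_cvg].
Unshelve. all: by end_near.
Qed.

Lemma Ck1_derive_addunitv n (g : 'rV[R]_n -> R^o) (w y : 'rV[R]_n) (p : 'I_n) (c : R) :
  Ck 1 g -> derivable g y w ->
  derivable g y (w + c *: unitv p) /\
  'D_(w + c *: unitv p) g y = 'D_w g y + c * 'D_(unitv p) g y.
Proof.
move=> g1 dw.
have Q : (fun h : R => h^-1 *: ((g \o shift y) (h *: (w + c *: unitv p)) - g y))
    @ (0:R)^' --> 'D_w g y + c * 'D_(unitv p) g y.
  have -> : (fun h : R => h^-1 *: ((g \o shift y) (h *: (w + c *: unitv p)) - g y)) =
      (fun h : R => h^-1 *: (g (h *: w + y) - g y) +
         h^-1 *: (g ((h * c) *: unitv p + (h *: w + y)) - g (h *: w + y))).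
    apply: funext => h /=; rewrite -scalerDr [in RHS]addrC subrKA.
    by congr (_ *: (g _ - _)); rewrite scalerDr scalerA addrCA addrA.
  by apply: cvgD; [exact: dw | exact: Ck1_partial_increment_cvg].
split; first by apply/cvg_ex; exists ('D_w g y + c * 'D_(unitv p) g y).
exact: cvg_lim Q.
Qed.

Lemma Ck1_derive n (g : 'rV[R]_n -> R^o) (w y : 'rV[R]_n) : Ck 1 g ->
  derivable g y w /\ 'D_w g y = \sum_(q < n) w 0 q * 'D_(unitv q) g y.
Proof.
move=> g1.
suff sumP r : forall y, derivable g y (\sum_(q <- r) w 0 q *: unitv q) /\
    'D_(\sum_(q <- r) w 0 q *: unitv q) g y = \sum_(q <- r) w 0 q * 'D_(unitv q) g y.
  by have := sumP (index_enum 'I_n) y; rewrite -(row_sum_delta w).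
elim: r => [|q r IH] z; first by rewrite !big_nil; split; [exact: derivable0 | exact: derive0].
have [dr Dr] := IH z; rewrite !big_cons addrC [in RHS]addrC -Dr.
exact: Ck1_derive_addunitv.
Qed.

Lemma Ck1_deriveD n (g : 'rV[R]_n -> R^o) (v w y : 'rV[R]_n) : Ck 1 g ->
  'D_(v + w) g y = 'D_v g y + 'D_w g y.
Proof.
move=> g1; rewrite (Ck1_derive _ _ g1).2 (Ck1_derive _ _ g1).2 (Ck1_derive _ _ g1).2.
by rewrite -big_split; apply: eq_bigr => q _; rewrite mxE mulrDl.
Qed.

Lemma continuous_sum (T : topologicalType) (I : Type) (r : seq I) (P : pred I)
    (F : I -> T -> R^o) :
  (forall i, P i -> continuous (F i)) -> continuous (fun x => \sum_(i <- r | P i) F i x).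
Proof.
move=> Fc; rewrite -fct_sumE.
apply: (big_ind (fun f : T -> R^o => continuous f)) => // [|f g fc gc x].
  exact: cst_continuous.
exact: continuousD (fc x) (gc x).
Qed.

Lemma Ck1_cst n (c : R) : Ck 1 (fun _ : 'rV[R]_n => c : R^o).
Proof.
split=> [x i|i]; first exact: derivable_cst.
rewrite (_ : 'D_(unitv i) _ = fun=> 0); first exact: cst_continuous.
by apply: funext => x; rewrite derive_cst.
Qed.

Lemma Ck1D n (f g : 'rV[R]_n -> R^o) : Ck 1 f -> Ck 1 g -> Ck 1 (f + g).
Proof.
move=> [fd fc] [gd gc]; split=> [x i|i]; first exact: derivableD.
rewrite (_ : 'D_(unitv i) _ = 'D_(unitv i) f + 'D_(unitv i) g).
  by move=> x; exact: continuousD (fc i x) (gc i x).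
by apply: funext => x; rewrite deriveD.
Qed.

Lemma Ck1N n (f : 'rV[R]_n -> R^o) : Ck 1 f -> Ck 1 (- f).
Proof.
move=> [fd fc]; split=> [x i|i]; first exact: derivableN.
rewrite (_ : 'D_(unitv i) _ = fun x => - 'D_(unitv i) f x).
  by move=> x; exact: continuousN (fc i x).
by apply: funext => x; rewrite deriveN.
Qed.

Lemma Ck1B n (f g : 'rV[R]_n -> R^o) : Ck 1 f -> Ck 1 g -> Ck 1 (f - g).
Proof. by move=> f1 g1; apply: Ck1D => //; exact: Ck1N. Qed.

Lemma Ck1_sum n (I : Type) (r : seq I) (P : pred I) (F : I -> 'rV[R]_n -> R^o) :
  (forall i, P i -> Ck 1 (F i)) -> Ck 1 (\sum_(i <- r | P i) F i).
Proof.
move=> F1; apply: (big_ind (fun f : 'rV_n -> R^o => Ck 1 f)) => //; last exact: Ck1D.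
exact: Ck1_cst.
Qed.

Lemma colsub_continuous m n (s : 'I_n -> 'I_m) :
  continuous (fun x : 'rV[R]_m => colsub s x).
Proof.
move=> x A /nbhs_ballP [e e0 eA]; apply/nbhs_ballP; exists e => // y [_ xy].
by apply: eA; split => // i j; rewrite !mxE; exact: xy.
Qed.

Lemma Ck1_colsub m n (s : 'I_n -> 'I_m) (g : 'rV[R]_n -> R^o) :
  Ck 1 g -> Ck 1 (fun x : 'rV[R]_m => g (colsub s x)).
Proof.
move=> g1; have [_ gc] := g1.
have partialE x i : derivable (fun x => g (colsub s x)) x (unitv i) /\
    'D_(unitv i) (fun x => g (colsub s x)) x =
    \sum_q colsub s (unitv i) 0 q * 'D_(unitv q) g (colsub s x).
  have [dE ->] : (derivable (fun x => g (colsub s x)) x (unitv i) <->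
                  derivable g (colsub s x) (colsub s (unitv i))) /\
      'D_(unitv i) (fun x => g (colsub s x)) x = 'D_(colsub s (unitv i)) g (colsub s x).
    apply: increment_eq_derive => h.
    by congr (g _ - _); apply/rowP => q; rewrite !mxE.
  have [dg Dg] := Ck1_derive (colsub s (unitv i)) (colsub s x) g1.
  by split; [exact/dE | exact: Dg].
split=> [x i|i]; first exact: (partialE x i).1.
rewrite (_ : 'D_(unitv i) _ = fun x =>
    (\sum_q colsub s (unitv i) 0 q * 'D_(unitv q) g (colsub s x) : R^o)).
  apply: continuous_sum => q _ x.
  apply: (@continuousZ _ R^o _ (fun=> _) (fun x => 'D_(unitv q) g (colsub s x)) x).
    exact: cst_continuous.
  have := @continuous_comp _ _ _ (fun x : 'rV_m => colsub s x) ('D_(unitv q) g) x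
    (@colsub_continuous _ _ s x) (gc q _); exact.
by apply: funext => x; exact: (partialE x i).2.
Qed.

Definition Ssub_pt (m : 'I_3) (a b : R) : 'rV[R]_3 := \row_q (if q == m then a else b).

Lemma Ssub_ptP m a b : Ssub m (Ssub_pt m a b).
Proof. by move=> p q pm qm; rewrite !mxE (negbTE pm) (negbTE qm). Qed.

Lemma Delta_Ssub_pt m a : Delta (Ssub_pt m a a).
Proof. by rewrite /Delta !mxE !if_same. Qed.

Lemma ord3_cases (i j k m : 'I_3) : i != j -> j != k -> i != k ->
  [\/ m = i, m = j | m = k].
Proof.
move=> ij jk ik.
case: (eqVneq m i) => [->|mi]; first by constructor 1.
case: (eqVneq m j) => [->|mj]; first by constructor 2.
case: (eqVneq m k) => [->|mk]; first by constructor 3.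
move: ij jk ik mi mj mk; rewrite -!(inj_eq val_inj) /=.
by move: (ltn_ord i) (ltn_ord j) (ltn_ord k) (ltn_ord m); lia.
Qed.

Lemma SsubP (i j k : 'I_3) (y : 'rV[R]_3) : i != j -> j != k -> i != k ->
  Ssub k y <-> y 0 i = y 0 j.
Proof.
move=> ij jk ik; split=> [Sy | yij a b]; first exact: Sy.
by case: (ord3_cases a ij jk ik) (ord3_cases b ij jk ik) => -> [] -> //; rewrite eqxx.
Qed.

Section Coupling.
Variable G : forall A : {set 'I_3}, R -> 'rV[R]_#|A| -> R.
Arguments G : clear implicits.

Definition edge_term (l : 'I_3) (A : {set 'I_3}) (x : 'rV[R]_3) : R :=
  if l \in A then G A (x 0 l) (tail_state A x) else 0.

Lemma netvfE E F (x : 'rV[R]_3) l :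
  netvf E F G x 0 l = F (x 0 l) + \sum_(A in E) edge_term l A x.
Proof. by rewrite mxE big_mkcondr. Qed.

Lemma tail_state_col_perm (A : {set 'I_3}) (g : R -> 'rV[R]_#|A| -> R) (s : {perm 'I_3})
    (y : R) (x : 'rV[R]_3) :
  tail_symmetric g -> {in A, forall m, s m \in A} ->
  g y (tail_state A (col_perm s x)) = g y (tail_state A x).
Proof.
move=> g_sym sA.
pose t j := enum_rank_in (sA _ (enum_valP j)) (s (enum_val j)).
have tE j : enum_val (t j) = s (enum_val j) by rewrite enum_rankK_in // sA ?enum_valP.
have t_inj : injective t.
  by move=> j1 j2 /(congr1 enum_val); rewrite !tE => /perm_inj /enum_val_inj.
rewrite -[RHS](g_sym (perm t_inj)); congr (g y _); apply/rowP => j.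
by rewrite !mxE permE tE.
Qed.

Lemma edge_term_Ssub_pt (A : {set 'I_3}) (u v : R) :
  tail_symmetric (G A) -> exists H : bool -> R, forall l m : 'I_3, l != m ->
    edge_term l A (Ssub_pt m v u) = (l \in A)%:R * H (m \in A).
Proof.
move=> GA_sym.
have tail_notin m : m \notin A -> tail_state A (Ssub_pt m v u) = const_mx u.
  move=> mA; apply/rowP => j; rewrite !mxE ifN //.
  by apply: contraNneq mA => <-; exact: enum_valP.
have tail_in m m' : m \in A -> m' \in A ->
    G A u (tail_state A (Ssub_pt m' v u)) = G A u (tail_state A (Ssub_pt m v u)).
  move=> mA m'A; rewrite -(@tail_state_col_perm A (G A) (tperm m m') u _ GA_sym).
    congr (G A u (tail_state A _)); apply/rowP => q.
    by rewrite !mxE (can2_eq (tpermK _ _) (tpermK _ _)) tpermR.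
  by move=> q qA; case: tpermP.
case: (pickP (mem A)) => [m0 m0A | A0]; last first.
  exists (fun=> 0) => l m _.
  by have lA : l \in A = false := A0 l; rewrite /edge_term lA mul0r.
exists (fun b => if b then G A u (tail_state A (Ssub_pt m0 v u)) else G A u (const_mx u)).
move=> l m lm; rewrite /edge_term mxE (negbTE lm).
case: (boolP (l \in A)) => _; rewrite ?mul0r ?mul1r //.
by case: (boolP (m \in A)) => mA; [exact: tail_in | rewrite tail_notin].
Qed.

Lemma edge_term_cycle A (i j k : 'I_3) (u v : R) :
  tail_symmetric (G A) -> i != j -> j != k -> i != k ->
  edge_term i A (Ssub_pt k v u) - edge_term j A (Ssub_pt k v u)
  + edge_term k A (Ssub_pt j v u) - edge_term i A (Ssub_pt j v u)
  + edge_term j A (Ssub_pt i v u) - edge_term k A (Ssub_pt i v u) = 0.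
Proof.
move=> /(edge_term_Ssub_pt u v) [H HP] ij jk ik.
rewrite !HP // 1?eq_sym //.
by case: (i \in A); case: (j \in A); case: (k \in A); rewrite /= ?mul1r ?mul0r; ring.
Qed.

Variables (E : {set {set 'I_3}}) (F : R -> R).
Hypothesis G_sym : forall A, A \in E -> tail_symmetric (G A).
Let f := netvf E F G.

Lemma netvf_cycle (i j k : 'I_3) (u v : R) : i != j -> j != k -> i != k ->
  f (Ssub_pt k v u) 0 i - f (Ssub_pt k v u) 0 j
  + f (Ssub_pt j v u) 0 k - f (Ssub_pt j v u) 0 i
  + f (Ssub_pt i v u) 0 j - f (Ssub_pt i v u) 0 k = 0.
Proof.
move=> ij jk ik.
have : \sum_(A in E) (edge_term i A (Ssub_pt k v u) - edge_term j A (Ssub_pt k v u)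
    + edge_term k A (Ssub_pt j v u) - edge_term i A (Ssub_pt j v u)
    + edge_term j A (Ssub_pt i v u) - edge_term k A (Ssub_pt i v u)) = 0.
  by apply: big1 => A AE; apply: edge_term_cycle => //; exact: G_sym.
rewrite !(sumrB, big_split) /= /f !netvfE !mxE.
rewrite !(ifN_eq _ _ ij, ifN_eq _ _ jk, ifN_eq _ _ ik).
rewrite !(ifN_eqC _ _ ij, ifN_eqC _ _ jk, ifN_eqC _ _ ik); lra.
Qed.

Lemma netvf_Ssub_invariant (i j k : 'I_3) : i != j -> j != k -> i != k ->
  dyn_invariant f (Ssub i) -> dyn_invariant f (Ssub j) -> dyn_invariant f (Ssub k).
Proof.
move=> ij jk ik inv_i inv_j x /(SsubP _ ij jk ik) xij; apply/(SsubP _ ij jk ik).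
have [ji kj ki] : [/\ j != i, k != j & k != i] by rewrite !(eq_sym k) eq_sym.
have xE : x = Ssub_pt k (x 0 k) (x 0 i).
  apply/rowP => m; rewrite mxE; case: eqP => [-> // | /eqP mk].
  by case: (ord3_cases m ij jk ik) mk => ->; rewrite ?eqxx.
have /(SsubP _ jk ki ji) fi := inv_i _ (@Ssub_ptP i (x 0 k) (x 0 i)).
have /(SsubP _ ik kj ij) fj := inv_j _ (@Ssub_ptP j (x 0 k) (x 0 i)).
have := netvf_cycle (x 0 i) (x 0 k) ij jk ik; rewrite -xE; lra.
Qed.

(* Realises the argument (x_l; x_A) of G A as [colsub (coupling_index l A) x]. *)
Definition coupling_index (l : 'I_3) (A : {set 'I_3}) (q : 'I_(1 + #|A|)) : 'I_3 :=
  if fintype.split q is inr j then enum_val j else l.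
Arguments coupling_index : clear implicits.

Lemma Ck1_netvf l : smooth1 F -> (forall A, A \in E -> smooth2 (G A)) ->
  Ck 1 (fun x => f x 0 l : R^o).
Proof.
move=> F_smooth G_smooth.
have -> : (fun x => f x 0 l : R^o) =
    (fun x => F (colsub (fun _ : 'I_1 => l) x 0 0) : R^o) +
    \sum_(A in E | l \in A) (fun x => G A (lsubmx (colsub (coupling_index l A) x) 0 0)
                                         (rsubmx (colsub (coupling_index l A) x)) : R^o).
  apply: funext => x; rewrite /f mxE addrfctE fct_sumE !mxE; congr (_ + _).
  apply: eq_bigr => A _; rewrite !mxE /coupling_index.
  rewrite (unsplitK (inl 0 : 'I_1 + 'I_#|A|)); congr (G A _ _).
  by apply/rowP => j; rewrite !mxE (unsplitK (inr j : 'I_1 + 'I_#|A|)).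
apply: Ck1D; first exact: Ck1_colsub (F_smooth 1%N).
apply: Ck1_sum => A /andP[AE _]; exact: Ck1_colsub (G_smooth A AE 1%N).
Qed.

End Coupling.

Lemma DeltaP (x : 'rV[R]_3) : Delta x <-> forall m, x 0 m = x 0 0.
Proof.
split=> [[x01 x12] [[|[|[|//]]] m3] | x_const]; last by rewrite /Delta !x_const.
- by congr (x 0 _); apply: val_inj.
- by rewrite (_ : Ordinal m3 = 1) //; apply: val_inj.
- by rewrite (_ : Ordinal m3 = 2%:R) -?x12 //; apply: val_inj.
Qed.

Lemma derive_eq0_on_line (V W : normedModType R) (g : V -> W) (a v : V) :
  (forall h : R, g (h *: v + a) = 0) -> 'D_v g a = 0.
Proof.
move=> g0; have ga0 : g a = 0 by have := g0 0; rewrite scale0r add0r.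
have incr h : g (h *: v + a) - g a = cst 0 (h *: v + a) - cst (0 : W) a.
  by rewrite (g0 h) ga0.
by have [_ ->] := increment_eq_derive incr; exact: derive_cst.
Qed.

Lemma real_eigenvalue n (M : 'M[R]_n) (w : 'rV[R]_n) (a : R) :
  w != 0 -> w *m M = a *: w ->
  eigenvalue (map_mx (fun r : R => complex.Complex r 0) M) (complex.Complex a 0).
Proof.
move=> w0 wM; apply/eigenvalueP; exists (map_mx (complex.real_complex R) w).
  change (map_mx (complex.real_complex R) w *m map_mx (complex.real_complex R) M =
          complex.real_complex R a *: map_mx (complex.real_complex R) w).
  by rewrite -map_mxM wM map_mxZ.
by rewrite map_mx_eq0.
Qed.

Definition transverse_rate (f : 'rV[R]_3 -> 'rV[R]_3) (i j : 'I_3) (xi : 'rV[R]_3) : R :=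
  'D_(unitv i) ((fun x => f x 0 i : R^o) - (fun x => f x 0 j : R^o)) xi.

Section Linearization.
Variables (f : 'rV[R]_3 -> 'rV[R]_3) (i j k : 'I_3) (xi : 'rV[R]_3).
Hypotheses (ij : i != j) (jk : j != k) (ik : i != k).
Hypotheses (fi1 : Ck 1 (fun x => f x 0 i : R^o)) (fj1 : Ck 1 (fun x => f x 0 j : R^o)).
Hypotheses (inv_k : dyn_invariant f (Ssub k)) (xi_Delta : Delta xi).

Let g := (fun x => f x 0 i : R^o) - (fun x => f x 0 j : R^o).

Let g_eq0_on_Ssub (x : 'rV[R]_3) : x 0 i = x 0 j -> g x = 0.
Proof.
move=> /(SsubP _ ij jk ik) /inv_k /(SsubP _ ij jk ik) fij.
by rewrite /g addrfctE /= fij subrr.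
Qed.

Let xi_ij : xi 0 i = xi 0 j.
Proof. by have /DeltaP xi_const := xi_Delta; rewrite !xi_const. Qed.

Lemma partial_k_eq0 : 'D_(unitv k) g xi = 0.
Proof.
apply: derive_eq0_on_line => h; apply: g_eq0_on_Ssub.
by rewrite !mxE (negbTE ik) (negbTE jk) andbF mulr0 !add0r xi_ij.
Qed.

Lemma partial_ij_eq0 : 'D_(unitv i) g xi + 'D_(unitv j) g xi = 0.
Proof.
rewrite -Ck1_deriveD; last exact: Ck1B.
apply: derive_eq0_on_line => h; apply: g_eq0_on_Ssub.
by rewrite !mxE !eqxx (negbTE ij) eq_sym (negbTE ij) /= addr0 add0r xi_ij.
Qed.

Lemma transverse_rate_sym : transverse_rate f j i xi = transverse_rate f i j xi.
Proof.
rewrite /transverse_rate -/g.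
have /eqP := partial_ij_eq0; rewrite addr_eq0 => /eqP ->.
rewrite -(opprB (fun x => f x 0 i : R^o)) deriveN //.
by have [gd _] := Ck1B fi1 fj1; exact: gd.
Qed.

Lemma hyperbolic_transverse_rate : hyperbolic f xi -> transverse_rate f i j xi != 0.
Proof.
move=> hyp; apply/eqP => rate0.
apply: (hyp (complex.Complex (transverse_rate f i j xi) 0)) => //.
have [[fid _] [fjd _]] := (fi1, fj1).
apply: (@real_eigenvalue _ _ (unitv i - unitv j)).
  apply/eqP => /rowP /(_ i) /eqP; rewrite !mxE eqxx (negbTE ij) /= subr0.
  by rewrite eqxx oner_eq0.
apply/rowP => m; rewrite mulmxBl -!rowE !mxE -(deriveB (fid _ _) (fjd _ _)) -/g.
have /eqP := partial_ij_eq0; rewrite addr_eq0 => /eqP gj.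
case: (ord3_cases m ij jk ik) => ->.
- by rewrite !eqxx (negbTE ij) subr0 mulr1.
- by rewrite !eqxx eq_sym (negbTE ij) sub0r mulrN1 /transverse_rate -/g gj opprK.
- by rewrite partial_k_eq0 eq_sym (negbTE ik) eq_sym (negbTE jk) andbF subrr mulr0.
Qed.

End Linearization.

Lemma cvg0_not_eventually_ge (T : Type) (F : set_system T) {FF : ProperFilter F}
    (phi : T -> R^o) (c : R) :
  0 < c -> phi t @[t --> F] --> (0:R^o) -> ~ \forall t \near F, c <= phi t.
Proof.
move=> c0 phi0 phi_ge.
have phi_lt : \forall t \near F, phi t < c by exact: cvgr_lt phi0 _ c0.
have [t [ct tc]] := filter_ex (filterI phi_ge phi_lt).
by have := le_lt_trans ct tc; rewrite ltxx.
Qed.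

Lemma mulr_self_gt0 (a : R) : a != 0 -> 0 < a * a.
Proof. by move=> a0; rewrite -expr2 exprn_even_gt0 //= a0 orbT. Qed.

Section ExpandingNotCvg0.
Variables (d d' : R^o -> R^o).
Hypotheses (d_derive : forall t : R^o, is_derive t 1 d (d' t)) (d_neq0 : forall t, d t != 0).

Let sqr_derive (t : R^o) : is_derive t 1 (d * d) (d t * d' t + d t * d' t).
Proof. by apply: is_derive_eq; rewrite /GRing.scale /= mulrC. Qed.

Let sqr_cvg0 (F : set_system R^o) {FF : Filter F} :
  d t @[t --> F] --> (0:R^o) -> d t * d t @[t --> F] --> (0:R^o).
Proof. by move=> d0; rewrite -(mulr0 0); exact: cvgM. Qed.

Lemma expanding_not_cvg0y :
  d t @[t --> +oo] --> (0:R^o) -> ~ \forall t \near +oo, 0 < d t * d' t.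
Proof.
move=> /sqr_cvg0 sqr0 [M [Mreal expanding]].
apply: (cvg0_not_eventually_ge (mulr_self_gt0 (d_neq0 (M + 1))) sqr0).
near=> t; have tM : M + 1 <= t by near: t; apply: nbhs_pinfty_ge; rewrite realD.
have [z [zb /= E]] := MVT_between sqr_derive (M + 1) t.
rewrite -subr_ge0 E mulr_ge0 ?subr_ge0 // ltW // -mulr2n mulrn_wgt0 // expanding //.
by case: zb => /andP[? ?]; lra.
Unshelve. all: by end_near.
Qed.

Lemma contracting_not_cvg0Ny :
  d t @[t --> -oo] --> (0:R^o) -> ~ \forall t \near -oo, d t * d' t < 0.
Proof.
move=> /sqr_cvg0 sqr0 [M [Mreal contracting]].
apply: (cvg0_not_eventually_ge (mulr_self_gt0 (d_neq0 (M - 1))) sqr0).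
near=> t; have tM : t <= M - 1 by near: t; apply: nbhs_ninfty_le; rewrite realB.
have [z [zb /= E]] := MVT_between sqr_derive (M - 1) t.
rewrite -subr_ge0 E -mulrNN mulr_ge0 ?oppr_ge0 ?subr_le0 // ltW // -mulr2n.
rewrite pmulrn_llt0 // contracting //.
by case: zb => /andP[? ?]; lra.
Unshelve. all: by end_near.
Qed.

End ExpandingNotCvg0.

Lemma is_derive_coord m n (x : R^o -> 'M[R]_(m, n)) (t : R^o) (v : 'M[R]_(m, n)) p q :
  is_derive t 1 x v -> is_derive t 1 (fun s => x s p q : R^o) (v p q).
Proof.
move=> [dx <-].
have Q : (fun h : R => (h^-1 *: ((x \o shift t) (h *: (1 : R^o)) - x t)) p q : R^o)
    @ (0 : R)^' --> (derive x t 1 p q : R^o).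
  by apply: (cvg_comp _ (fun M : 'M[R]_(m, n) => M p q) dx); exact: coord_continuous.
have E : (fun h : R => h^-1 *: (((fun s => x s p q : R^o) \o shift t) (h *: (1 : R^o))
      - x t p q)) = (fun h : R => (h^-1 *: ((x \o shift t) (h *: (1 : R^o)) - x t)) p q).
  by apply: funext => h; rewrite !mxE.
apply: DeriveDef; first by rewrite /derivable E; apply/cvg_ex; exists (derive x t 1 p q).
by rewrite /derive E; exact: cvg_lim Q.
Qed.

Lemma ball_rowP n (a y : 'rV[R]_n) (e : R) :
  ball a e y <-> 0 < e /\ forall m, `|a 0 m - y 0 m| < e.
Proof.
split=> [[e0 aye] | [e0 aye]]; first by split => // m; exact: aye.
by split => // p q; rewrite (ord1 p); exact: aye.
Qed.

Section TransverseDynamics.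
Variables (f : 'rV[R]_3 -> 'rV[R]_3) (i j : 'I_3) (xi : 'rV[R]_3) (x : R^o -> 'rV[R]_3).
Hypotheses (ij : i != j).
Hypotheses (fi1 : Ck 1 (fun y => f y 0 i : R^o)) (fj1 : Ck 1 (fun y => f y 0 j : R^o)).
Hypotheses (inv_Delta : dyn_invariant f Delta) (xi_Delta : Delta xi).
Hypotheses (x_sol : forall t : R^o, is_derive t 1 x (f (x t)))
  (x_Ssub : forall t, Ssub i (x t) /\ ~ Delta (x t)).

Let g := (fun y => f y 0 i : R^o) - (fun y => f y 0 j : R^o).
Let d (t : R^o) : R^o := x t 0 i - x t 0 j.

Let d_derive (t : R^o) : is_derive t 1 d (g (x t)).
Proof. by apply: is_deriveB; exact: is_derive_coord. Qed.

Let d_neq0 t : d t != 0.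
Proof.
apply/negP => /eqP /subr0_eq xij; have [Sx []] := x_Ssub t; apply/DeltaP => m.
suff x_j m' : x t 0 m' = x t 0 j by rewrite !x_j.
by case: (eqVneq m' i) => [-> // | m'i]; apply: Sx; rewrite // eq_sym.
Qed.

Let d_cvg0 (F : set_system R^o) {FF : Filter F} :
  x t @[t --> F] --> xi -> d t @[t --> F] --> (0 : R^o).
Proof.
move=> x_cvg; have /DeltaP xi_const := xi_Delta.
rewrite -(subrr (xi 0 0)) -{1}(xi_const i) -(xi_const j).
apply: cvgB; apply: (cvg_comp x (fun M : 'rV[R]_3 => M 0 _) x_cvg);
  exact: coord_continuous.
Qed.

Let g_Delta (y : 'rV[R]_3) : Delta y -> g y = 0.
Proof.
by move/inv_Delta/DeltaP => fy; rewrite /g addrfctE opprfctE /= (fy i) (fy j) subrr.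
Qed.

Let transverse_MVT t : exists z, (forall e, ball xi e (x t) -> ball xi e z) /\
  g (x t) = 'D_(unitv i) g z * d t.
Proof.
have [Sx _] := x_Ssub t; set b := x t 0 j.
have xE : x t = d t *: unitv i + Ssub_pt i b b.
  apply/rowP => m; rewrite !mxE if_same eqxx; case: (eqVneq m i) => [-> | mi].
    by rewrite mulr1 subrK.
  by rewrite mulr0 add0r; apply: Sx; rewrite // eq_sym.
have [gd _] := Ck1B fi1 fj1; have g_base := g_Delta (@Delta_Ssub_pt i b).
have [s [sb E]] := line_MVT (Ssub_pt i b b) (d t) (gd^~ i).
exists (s *: unitv i + Ssub_pt i b b); split.
  2: by rewrite [in LHS]xE mulrC -E -/g g_base subr0.
move=> e /ball_rowP [e0 near_x]; apply/ball_rowP; split => // m.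
have /DeltaP xi_const := xi_Delta; have := near_x j; rewrite xi_const.
rewrite !mxE if_same eqxx xi_const; case: (eqVneq m i) => _; last by rewrite mulr0 add0r.
move: (near_x i); rewrite xi_const mulr1 !ltr_norml => /andP[? ?] /andP[? ?].
rewrite /d /b in sb *; apply/andP; case: sb => /andP[? ?]; split; lra.
Qed.

Let near_xi_growth (F : set_system R^o) {FF : Filter F} (P : R -> Prop) :
  x t @[t --> F] --> xi -> (\forall z \near xi, P ('D_(unitv i) g z)) ->
  \forall t \near F, exists2 c, P c & d t * g (x t) = c * (d t * d t).
Proof.
move=> x_cvg /nbhs_ballP [e e0 eP].
near=> t; have [z [z_near ->]] := transverse_MVT t.
exists ('D_(unitv i) g z); last by rewrite mulrCA.
by apply/eP/z_near; near: t; exact: x_cvg _ (nbhsx_ballx xi e e0).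
Unshelve. all: by end_near.
Qed.

Let rate_cvg : 'D_(unitv i) g z @[z --> xi] --> transverse_rate f i j xi.
Proof. exact: (Ck1B fi1 fj1).2. Qed.

Lemma transverse_rate_le0 : x t @[t --> +oo] --> xi -> transverse_rate f i j xi <= 0.
Proof.
move=> x_cvg; rewrite leNgt; apply/negP => rate_pos.
apply: (expanding_not_cvg0y d_derive d_neq0 (d_cvg0 x_cvg)).
have rate_near : \forall z \near xi, 0 < 'D_(unitv i) g z.
  exact: cvgr_gt rate_cvg _ rate_pos.
apply: filterS (near_xi_growth (P := fun c => 0 < c) x_cvg rate_near) => t [c c0 ->].
exact: mulr_gt0 c0 (mulr_self_gt0 (d_neq0 t)).
Qed.

Lemma transverse_rate_ge0 : x t @[t --> -oo] --> xi -> 0 <= transverse_rate f i j xi.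
Proof.
move=> x_cvg; rewrite leNgt; apply/negP => rate_neg.
apply: (contracting_not_cvg0Ny d_derive d_neq0 (d_cvg0 x_cvg)).
have rate_near : \forall z \near xi, 'D_(unitv i) g z < 0.
  exact: cvgr_lt rate_cvg _ rate_neg.
apply: filterS (near_xi_growth (P := fun c => c < 0) x_cvg rate_near) => t [c c0 ->].
by rewrite nmulr_rlt0 // mulr_self_gt0.
Qed.

End TransverseDynamics.

Lemma ord3_third (i j : 'I_3) : i != j -> exists2 k : 'I_3, i != k & j != k.
Proof.
move=> ij; have ij' : (i : nat) != j by rewrite (inj_eq val_inj).
exists (inord (3 - i - j)); rewrite -(inj_eq val_inj) /= inordK;
  move: (ltn_ord i) (ltn_ord j) ij'; lia.
Qed.

Theorem mainTheorem2 (E : {set {set 'I_3}}) (F : R -> R)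
  (G : forall A : {set 'I_3}, R -> 'rV[R]_#|A| -> R) :
  undirected_hypergraph E ->
  smooth1 F ->
  (forall A, A \in E ->
     [/\ smooth2 (G A), tail_symmetric (G A) & tail_nontrivial (G A)]) ->
  ~ field_cycle (netvf E F G).
Proof.
move=> _ F_smooth G_props [i [j [xi [xi' [ij [inv_Delta [inv_i [inv_j [_ [xi_Delta [_
  [_ [xi_hyp [_ [_ [from_xi to_xi]]]]]]]]]]]]]]]].
have [x1 [x1_sol [x1_from [_ x1_in]]]] := from_xi.
have [x2 [x2_sol [_ [x2_to x2_in]]]] := to_xi.
have G_sym A : A \in E -> tail_symmetric (G A) by case/G_props.
have G_smooth A : A \in E -> smooth2 (G A) by case/G_props.
have f1 l := Ck1_netvf l F_smooth G_smooth.
have [k ik jk] := ord3_third ij.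
have inv_k := netvf_Ssub_invariant G_sym ij jk ik inv_i inv_j.
have ji : j != i by rewrite eq_sym.
have rate_ge0 :=
  transverse_rate_ge0 ij (f1 i) (f1 j) inv_Delta xi_Delta x1_sol x1_in x1_from.
have := transverse_rate_le0 ji (f1 j) (f1 i) inv_Delta xi_Delta x2_sol x2_in x2_to.
rewrite (transverse_rate_sym ij jk ik (f1 i) (f1 j) inv_k xi_Delta) => rate_le0.
have := hyperbolic_transverse_rate ij jk ik (f1 i) (f1 j) inv_k xi_Delta xi_hyp.
by rewrite eq_le rate_le0 rate_ge0.
Qed.
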